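(* Let $X$ be a compact metric space and let $f\colon X\to X$ be a homeomorphism such that the restriction $f|_{\Omega(f)}\colon \Omega(f)\to\Omega(f)$ has the pseudo-orbit tracing property. If $f$ has a positively expansive measure, then $f$ has positive topological entropy, i.e. $h(f)>0$.
   Context: For a homeomorphism $g\colon Y\to Y$ of a metric space $(Y,d)$: given $\delta\ge 0$, a bi-infinite sequence $(x_i)_{i\in\mathbb{Z}}$ in $Y$ is a $\delta$-pseudo-orbit if $d(g(x_i),x_{i+1})\le\delta$ for all $i\in\mathbb{Z}$; it is $\epsilon$-shadowed if there is $x\in Y$ with $d(g^i(x),x_i)\le\epsilon$ for all $i\in\mathbb{Z}$. $g$ has the pseudo-orbit tracing property (POTP) if for every $\epsilon>0$ there is $\delta>0$ such that every $\delta$-pseudo-orbit of $g$ can be $\epsilon$-shadowed. The nonwandering set $\Omega(f)$ is the set of $x\in X$ such that for every neighborhood $U$ of $x$ there is $n\ge 1$ with $f^n(U)\cap U\ne\emptyset$; it is compact and $f(\Omega(f))=\Omega(f)$. For $x\in X$ and $\delta\ge0$ let $\Phi_\delta(x)=\{y\in X: d(f^i(x),f^i(y))\le\delta \text{ for all } i\in\mathbb{N}=\{0,1,2,\dots\}\}$. A (not necessarily invariant) Borel probability measure $\mu$ on $X$ is positively expansive if there is $e>0$ (an expansivity constant) such that $\mu(\Phi_e(x))=0$ for every $x\in X$. $h(f)$ denotes the topological entropy of $f$. *)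

From Stdlib Require Import Reals ZArith List.
Open Scope R_scope.

Definition is_metric {X : Type} (d : X -> X -> R) : Prop :=
  (forall x y, 0 <= d x y) /\
  (forall x y, d x y = 0 <-> x = y) /\
  (forall x y, d x y = d y x) /\
  (forall x y z, d x z <= d x y + d y z).

Definition compact_metric {X : Type} (d : X -> X -> R) : Prop :=
  forall u : nat -> X, exists (phi : nat -> nat) (l : X),
    (forall n m, (n < m)%nat -> (phi n < phi m)%nat) /\
    (forall eps, eps > 0 -> exists N, forall n, (n >= N)%nat -> d (u (phi n)) l < eps).

Definition continuous_map {X : Type} (d : X -> X -> R) (f : X -> X) : Prop :=
  forall x eps, eps > 0 -> exists delta, delta > 0 /\
    forall y, d x y < delta -> d (f x) (f y) < eps.

Definition homeomorphism {X : Type} (d : X -> X -> R) (f : X -> X) : Prop :=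
  exists g : X -> X, continuous_map d f /\ continuous_map d g /\
    (forall x, g (f x) = x) /\ (forall x, f (g x) = x).

Definition open_set {X : Type} (d : X -> X -> R) (U : X -> Prop) : Prop :=
  forall x, U x -> exists r, r > 0 /\ forall y, d x y < r -> U y.

Definition neighborhood {X : Type} (d : X -> X -> R) (x : X) (U : X -> Prop) : Prop :=
  exists V, open_set d V /\ V x /\ forall y, V y -> U y.

Definition nonwandering {X : Type} (d : X -> X -> R) (f : X -> X) (x : X) : Prop :=
  forall U, neighborhood d x U ->
    exists n : nat, (n >= 1)%nat /\ exists y, U y /\ U (Nat.iter n f y).

(* Since f is a bijection,
   the bi-infinite orbit (f^i x)_{i in Z} of x is the unique y : Z -> X with
   y 0 = x and y (i+1) = f (y i). *)
Definition potp_on_nonwandering {X : Type} (d : X -> X -> R) (f : X -> X) : Prop :=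
  forall eps, eps > 0 -> exists delta, delta > 0 /\
    forall xs : Z -> X,
      (forall i, nonwandering d f (xs i)) ->
      (forall i, d (f (xs i)) (xs (Z.succ i)) <= delta) ->
      exists x, nonwandering d f x /\
        exists y : Z -> X, y 0%Z = x /\ (forall i, y (Z.succ i) = f (y i)) /\
          (forall i, d (y i) (xs i) <= eps).

Definition sigma_algebra {X : Type} (S : (X -> Prop) -> Prop) : Prop :=
  S (fun _ => True) /\
  (forall A, S A -> S (fun x => ~ A x)) /\
  (forall A : nat -> X -> Prop, (forall n, S (A n)) -> S (fun x => exists n, A n x)).

Definition borel {X : Type} (d : X -> X -> R) (A : X -> Prop) : Prop :=
  forall S : (X -> Prop) -> Prop, sigma_algebra S ->
    (forall U, open_set d U -> S U) -> S A.

Definition borel_probability {X : Type} (d : X -> X -> R) (mu : (X -> Prop) -> R) : Prop :=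
  (forall A, borel d A -> 0 <= mu A) /\
  mu (fun _ => True) = 1 /\
  (forall A : nat -> X -> Prop,
     (forall n, borel d (A n)) ->
     (forall n m x, n <> m -> A n x -> A m x -> False) ->
     infinite_sum (fun n => mu (A n)) (mu (fun x => exists n, A n x))).

Definition Phi {X : Type} (d : X -> X -> R) (f : X -> X) (delta : R) (x : X) : X -> Prop :=
  fun y => forall i : nat, d (Nat.iter i f x) (Nat.iter i f y) <= delta.

Definition positively_expansive_measure {X : Type} (d : X -> X -> R) (f : X -> X)
  (mu : (X -> Prop) -> R) : Prop :=
  borel_probability d mu /\
  exists e, e > 0 /\ forall x, mu (Phi d f e x) = 0.

(* ---------- topological entropy (Bowen) ----------
   E is (n,eps)-separated if distinct points of E satisfy
   max_{0<=i<n} d(f^i x, f^i y) > eps.  With s(n,eps) the maximal cardinality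
   of such a (finite) set,
     h(f) = lim_{eps->0} limsup_n (1/n) log s(n,eps)
          = sup_{eps>0} limsup_n (1/n) log s(n,eps)   (monotone in eps).
   Hence h(f) > 0 iff for some eps > 0, limsup_n (1/n) log s(n,eps) > 0, i.e.
   there is c > 0 with (1/n) log s(n,eps) > c for infinitely many n, i.e.
   infinitely many n admit an (n,eps)-separated set of more than exp(c n) points. *)
Definition separated_set {X : Type} (d : X -> X -> R) (f : X -> X) (n : nat) (eps : R)
  (E : list X) : Prop :=
  NoDup E /\
  forall x y, In x E -> In y E -> x <> y ->
    exists i : nat, (i < n)%nat /\ d (Nat.iter i f x) (Nat.iter i f y) > eps.

Definition positive_topological_entropy {X : Type} (d : X -> X -> R) (f : X -> X) : Prop :=
  exists eps, eps > 0 /\ exists c, c > 0 /\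
    forall N : nat, exists n : nat, (n >= N)%nat /\ (n >= 1)%nat /\
      exists E, separated_set d f n eps E /\ exp (c * INR n) < INR (length E).

(* Suppose h(f) = 0.  Two delta-pseudo-loops in Omega(f) through a common point that
   are more than 3 eps apart at some time would form a horseshoe: by shadowing, every
   infinite concatenation of the two loops is eps-traced by an orbit, which yields 2^M
   points that are (M L, eps)-separated, hence positive entropy.  Every orbit eventually
   stays near Omega(f) and keeps returning near itself, so its tail is followed by such
   pseudo-loops; consequently two such tails that start close stay close forever.  By
   compactness finitely many reference tails suffice, so X is a countable union of tubes
   {y | f^(t+n) y stays e/2-close to f^t y0}.  Each tube is covered by finitely many sets
   Phi_e(b), which are null by expansivity: this contradicts mu(X) = 1. *)

From Stdlib Require Import Reals Lra Lia ZArith List FinFun.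
From Stdlib Require Import Classical IndefiniteDescription.
From Stdlib Require Import FunctionalExtensionality PropExtensionality.
Open Scope R_scope.

Section Metric.
Variable X : Type.
Variable d : X -> X -> R.
Hypothesis Hm : is_metric d.

Lemma d_nonneg x y : 0 <= d x y. Proof. apply Hm. Qed.
Lemma d_sym x y : d x y = d y x. Proof. apply Hm. Qed.
Lemma d_triangle x y z : d x z <= d x y + d y z. Proof. apply Hm. Qed.
Lemma d_self x : d x x = 0. Proof. now apply Hm. Qed.

Lemma d_triangle_sym x y z : d x z <= d y x + d y z.
Proof. rewrite (d_sym y x). apply d_triangle. Qed.

End Metric.

(* Otherwise a greedy choice builds a sequence in [A] with no related pair. *)
Lemma finite_net {X : Type} (A : X -> Prop) (Rel : X -> X -> Prop) :
  (forall u : nat -> X, (forall m, A (u m)) -> exists i j, (i < j)%nat /\ Rel (u j) (u i)) ->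
  exists L : list X, (forall b, In b L -> A b) /\ forall a, A a -> exists b, In b L /\ Rel a b.
Proof.
  intros Hrep. apply NNPP; intro Hno.
  assert (Hnext : forall L, (forall b, In b L -> A b) ->
            exists a, A a /\ forall b, In b L -> ~ Rel a b).
  { intros L HL. apply NNPP; intro Hn. apply Hno. exists L. split; [exact HL|].
    intros a Ha. apply NNPP; intro Hc. apply Hn. exists a. split; [exact Ha|].
    intros b Hb Hr. apply Hc; eauto. }
  destruct (Hnext nil ltac:(intros b [])) as [a0 _].
  assert (Hnext' : forall L, exists a, (forall b, In b L -> A b) ->
            A a /\ forall b, In b L -> ~ Rel a b).
  { intro L. destruct (classic (forall b, In b L -> A b)) as [HL|HL].
    - destruct (Hnext L HL) as [a Ha]. now exists a.
    - exists a0. intro; contradiction. }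
  destruct (functional_choice _ Hnext') as [next Hnx].
  pose (greedy := fix greedy (m : nat) : list X :=
          match m with O => nil | S m => greedy m ++ next (greedy m) :: nil end).
  assert (HA : forall m b, In b (greedy m) -> A b).
  { induction m as [|m IH]; simpl; intros b Hb; [contradiction|].
    apply in_app_or in Hb. destruct Hb as [Hb|[<-|[]]]; [auto|]. now apply Hnx. }
  assert (Hin : forall i m, (i < m)%nat -> In (next (greedy i)) (greedy m)).
  { intros i m; induction m as [|m IH]; intro Him; [lia|]. simpl. apply in_or_app.
    destruct (Nat.eq_dec i m) as [->|]; [right; now left|left; apply IH; lia]. }
  destruct (Hrep (fun m => next (greedy m))) as [i [j [Hij Hr]]].
  { intro m. apply Hnx, HA. }
  exact (proj2 (Hnx (greedy j) (HA j)) _ (Hin i j Hij) Hr).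
Qed.

Lemma strict_mono_ge (phi : nat -> nat) :
  (forall n m, (n < m)%nat -> (phi n < phi m)%nat) -> forall n, (n <= phi n)%nat.
Proof. intros H n; induction n; [lia|]. specialize (H n (S n) ltac:(lia)). lia. Qed.

Lemma strict_mono_add (phi : nat -> nat) :
  (forall n m, (n < m)%nat -> (phi n < phi m)%nat) -> forall n k, (phi n + k <= phi (n + k))%nat.
Proof.
  intros H n k; induction k; [rewrite !Nat.add_0_r; lia|].
  specialize (H (n + k)%nat (n + S k)%nat ltac:(lia)). lia.
Qed.

Section Compact.
Variable X : Type.
Variable d : X -> X -> R.
Variable f : X -> X.
Hypothesis Hm : is_metric d.
Hypothesis Hc : compact_metric d.
Hypothesis Hf : continuous_map d f.

Definition converges (v : nat -> X) (l : X) : Prop :=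
  forall eps, eps > 0 -> exists N, forall m, (m >= N)%nat -> d (v m) l < eps.

Lemma subseq_converges (u : nat -> X) : exists (phi : nat -> nat) (l : X),
  (forall n m, (n < m)%nat -> (phi n < phi m)%nat) /\ converges (fun n => u (phi n)) l.
Proof. destruct (Hc u) as [phi [l [H1 H2]]]. now exists phi, l. Qed.

Lemma converges_close v l r : converges v l -> r > 0 ->
  exists N, forall m m', (m >= N)%nat -> (m' >= N)%nat -> d (v m) (v m') < r.
Proof.
  intros Hv Hr. destruct (Hv (r / 2) ltac:(lra)) as [N HN]. exists N. intros m m' H H'.
  pose proof (HN m H). pose proof (HN m' H').
  pose proof (d_triangle _ _ Hm (v m) l (v m')). rewrite (d_sym _ _ Hm l) in *. lra.
Qed.

Lemma iter_continuous i : continuous_map d (Nat.iter i f).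
Proof.
  induction i as [|i IH]; intros x eps Heps; simpl.
  - now exists eps.
  - destruct (Hf (Nat.iter i f x) eps Heps) as [r1 [Hr1 H1]].
    destruct (IH x r1 Hr1) as [r2 [Hr2 H2]]. exists r2; auto.
Qed.

Lemma converges_continuous h v l : continuous_map d h -> converges v l ->
  converges (fun m => h (v m)) (h l).
Proof.
  intros Hh Hv eps Heps. destruct (Hh l eps Heps) as [r [Hr Hl]].
  destruct (Hv r Hr) as [N HN]. exists N; intros m Hmn.
  rewrite (d_sym _ _ Hm). apply Hl. rewrite (d_sym _ _ Hm). auto.
Qed.

Lemma converges_iter_upto n v l : converges v l -> forall eps, eps > 0 ->
  exists N, forall m, (m >= N)%nat -> forall i, (i < n)%nat ->
    d (Nat.iter i f (v m)) (Nat.iter i f l) < eps.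
Proof.
  intros Hv eps Heps. induction n as [|n [N1 HN1]].
  - exists O; intros; lia.
  - destruct (converges_continuous _ v l (iter_continuous n) Hv eps Heps) as [N2 HN2].
    exists (N1 + N2)%nat. intros m Hmn i Hi.
    destruct (Nat.eq_dec i n) as [->|]; [apply HN2|apply HN1]; lia.
Qed.

Lemma uniform_continuity eps : eps > 0 ->
  exists rho, rho > 0 /\ forall a b, d a b < rho -> d (f a) (f b) < eps.
Proof.
  intro Heps. apply NNPP; intro Hno.
  assert (Hbad : forall m : nat, exists p : X * X,
    d (fst p) (snd p) < / INR (S m) /\ d (f (fst p)) (f (snd p)) >= eps).
  { intro m. apply NNPP; intro Hn. apply Hno. exists (/ INR (S m)). split.
    - apply Rinv_0_lt_compat, lt_0_INR; lia.
    - intros a b Hab. apply Rnot_ge_lt. intro Hge. apply Hn. now exists (a, b). }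
  destruct (functional_choice _ Hbad) as [p Hp].
  destruct (subseq_converges (fun m => fst (p m))) as [phi [l [Hphi Hl]]].
  destruct (Hf l (eps / 2) ltac:(lra)) as [r [Hr Hfl]].
  destruct (Hl (r / 2) ltac:(lra)) as [N1 HN1].
  destruct (archimed_cor1 (r / 2) ltac:(lra)) as [N2 [HN2 HN2pos]].
  set (m := (N1 + N2)%nat).
  specialize (HN1 m ltac:(unfold m; lia)). simpl in HN1.
  destruct (Hp (phi m)) as [Hclose Hfar].
  assert (Hinv : / INR (S (phi m)) <= / INR N2).
  { apply Rinv_le_contravar; [apply lt_0_INR; lia|]. apply le_INR.
    pose proof (strict_mono_ge phi Hphi m). unfold m in *; lia. }
  set (a := fst (p (phi m))) in *. set (b := snd (p (phi m))) in *.
  rewrite (d_sym _ _ Hm) in HN1.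
  assert (Ha : d l a < r) by lra.
  assert (Hb : d l b < r) by (pose proof (d_triangle _ _ Hm l a b); lra).
  pose proof (Hfl a Ha). pose proof (Hfl b Hb). pose proof (d_triangle_sym _ _ Hm (f a) (f l) (f b)).
  lra.
Qed.

Lemma finite_ball_net (A : X -> Prop) r : r > 0 -> exists L : list X,
  (forall b, In b L -> A b) /\ forall a, A a -> exists b, In b L /\ d a b < r.
Proof.
  intro Hr. apply finite_net. intros u _.
  destruct (subseq_converges u) as [phi [l [Hphi Hl]]].
  destruct (converges_close _ _ r Hl Hr) as [N HN].
  exists (phi N), (phi (S N)). split; [apply Hphi; lia|]. apply HN; lia.
Qed.

Lemma finite_bowen_net (A : X -> Prop) n r : r > 0 -> exists L : list X,
  (forall b, In b L -> A b) /\ forall a, A a -> exists b, In b L /\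
    forall i, (i < n)%nat -> d (Nat.iter i f a) (Nat.iter i f b) <= r.
Proof.
  intro Hr. apply finite_net. intros u _.
  destruct (subseq_converges u) as [phi [l [Hphi Hl]]].
  destruct (converges_iter_upto n _ _ Hl (r / 2) ltac:(lra)) as [N HN].
  exists (phi N), (phi (S N)). split; [apply Hphi; lia|]. intros i Hi.
  pose proof (HN N ltac:(lia) i Hi). pose proof (HN (S N) ltac:(lia) i Hi). simpl in *.
  pose proof (d_triangle _ _ Hm (Nat.iter i f (u (phi (S N)))) (Nat.iter i f l)
    (Nat.iter i f (u (phi N)))) as Htri.
  rewrite (d_sym _ _ Hm (Nat.iter i f l)) in Htri. lra.
Qed.

End Compact.
Section Measure.
Variable X : Type.
Variable d : X -> X -> R.
Variable mu : (X -> Prop) -> R.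
Hypothesis Hmu : borel_probability d mu.

Lemma pred_ext (A B : X -> Prop) : (forall x, A x <-> B x) -> A = B.
Proof.
  intro H. apply functional_extensionality; intro x. now apply propositional_extensionality.
Qed.

Lemma borel_open U : open_set d U -> borel d U.
Proof. intros HU S HS HO. auto. Qed.

Lemma borel_compl A : borel d A -> borel d (fun x => ~ A x).
Proof. intros HA S HS HO. apply HS. apply HA; auto. Qed.

Lemma borel_Union (A : nat -> X -> Prop) :
  (forall n, borel d (A n)) -> borel d (fun x => exists n, A n x).
Proof. intros HA S HS HO. apply HS. intro n. apply HA; auto. Qed.

Lemma borel_setT : borel d (fun _ => True).
Proof. intros S HS HO. apply HS. Qed.

Lemma borel_set0 : borel d (fun _ => False).
Proof.
  rewrite (pred_ext (fun _ => False) (fun x => ~ True)) by (intro; cbv beta; tauto). apply borel_compl, borel_setT.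
Qed.

Definition pair_seq (A B : X -> Prop) (n : nat) : X -> Prop :=
  match n with O => A | S O => B | _ => fun _ => False end.

Lemma pair_seq_Union A B : (fun x => exists n, pair_seq A B n x) = (fun x => A x \/ B x).
Proof.
  apply pred_ext; intro x; split.
  - intros [[|[|n]] Hn]; simpl in Hn; tauto.
  - intros [H|H]; [now exists O|now exists 1%nat].
Qed.

Lemma borel_pair_seq A B : borel d A -> borel d B -> forall n, borel d (pair_seq A B n).
Proof. intros HA HB [|[|n]]; simpl; auto using borel_set0. Qed.

Lemma borel_or A B : borel d A -> borel d B -> borel d (fun x => A x \/ B x).
Proof.
  intros HA HB. rewrite <- pair_seq_Union. apply borel_Union, borel_pair_seq; auto.
Qed.

Lemma borel_and A B : borel d A -> borel d B -> borel d (fun x => A x /\ B x).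
Proof.
  intros HA HB. rewrite (pred_ext (fun x => A x /\ B x) (fun x => ~ (~ A x \/ ~ B x))) by (intro; cbv beta; tauto).
  apply borel_compl, borel_or; apply borel_compl; auto.
Qed.

Lemma borel_closed A : open_set d (fun x => ~ A x) -> borel d A.
Proof.
  intro H. rewrite (pred_ext A (fun x => ~ ~ A x)) by (intro; cbv beta; tauto). apply borel_compl, borel_open, H.
Qed.

Lemma infinite_sum_eventually_const (u : nat -> R) N s l :
  infinite_sum u l -> (forall n, (n >= N)%nat -> sum_f_R0 u n = s) -> l = s.
Proof.
  intros Hl Hs. apply (UL_sequence _ _ _ Hl). intros eps Heps. exists N. intros n Hn.
  rewrite (Hs n Hn). unfold R_dist. rewrite Rminus_diag, Rabs_R0. auto.
Qed.

Lemma sum_const_limit c : Un_cv (sum_f_R0 (fun _ => c)) c -> c = 0.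
Proof.
  intro H. destruct (Req_dec c 0) as [|Hc]; [assumption|exfalso].
  assert (Hp : Rabs c / 2 > 0) by (pose proof (Rabs_pos_lt c Hc); lra).
  destruct (H _ Hp) as [N HN]. pose proof (HN N ltac:(lia)) as H1. pose proof (HN (S N) ltac:(lia)) as H2.
  unfold R_dist in *. simpl in H2.
  pose proof (Rabs_triang (sum_f_R0 (fun _ => c) N + c - c) (- (sum_f_R0 (fun _ => c) N - c))) as H3.
  replace (sum_f_R0 (fun _ => c) N + c - c + - (sum_f_R0 (fun _ => c) N - c)) with c in H3 by ring.
  rewrite Rabs_Ropp in H3. lra.
Qed.

Lemma measure_set0 : mu (fun _ => False) = 0.
Proof.
  destruct Hmu as [_ [_ Hadd]].
  specialize (Hadd (fun _ _ => False) (fun _ => borel_set0) ltac:(tauto)). cbv beta in Hadd.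
  rewrite (pred_ext (fun x => exists _ : nat, False) (fun _ => False)) in Hadd
    by (intro; split; [intros [_ []]|tauto]).
  now apply sum_const_limit.
Qed.

Lemma measure_or A B : borel d A -> borel d B -> (forall x, A x -> B x -> False) ->
  mu (fun x => A x \/ B x) = mu A + mu B.
Proof.
  intros HA HB Hdis. destruct Hmu as [_ [_ Hadd]].
  assert (Hdisj : forall n m x, n <> m -> pair_seq A B n x -> pair_seq A B m x -> False).
  { intros [|[|n]] [|[|m]] x Hnm; simpl; try tauto; eauto. }
  specialize (Hadd _ (borel_pair_seq A B HA HB) Hdisj). rewrite pair_seq_Union in Hadd.
  apply (infinite_sum_eventually_const _ 1%nat _ _ Hadd).
  intros n Hn. induction n as [|n IH]; [lia|]. destruct n as [|n]; [simpl; ring|].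
  rewrite tech5, IH by lia. simpl. rewrite measure_set0. ring.
Qed.

Lemma measure_mono A B : borel d A -> borel d B -> (forall x, A x -> B x) -> mu A <= mu B.
Proof.
  intros HA HB Hsub. destruct Hmu as [Hpos _].
  assert (HBA : borel d (fun x => B x /\ ~ A x)) by (apply borel_and, borel_compl; auto).
  pose proof (measure_or A _ HA HBA ltac:(intros x Ha [_ Hb]; auto)) as Hor.
  cbv beta in Hor.
  rewrite (pred_ext (fun x => A x \/ B x /\ ~ A x) B) in Hor by (intro x; split; [intros [Ha|[Hb _]]; auto|intro; destruct (classic (A x)); tauto]).
  pose proof (Hpos _ HBA). lra.
Qed.

Lemma measure_disjoint_Union_null (D : nat -> X -> Prop) :
  (forall n, borel d (D n)) -> (forall n, mu (D n) = 0) ->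
  (forall n m x, n <> m -> D n x -> D m x -> False) -> mu (fun x => exists n, D n x) = 0.
Proof.
  intros HDb HD0 Hdis. destruct Hmu as [_ [_ Hadd]].
  apply (infinite_sum_eventually_const _ O _ _ (Hadd _ HDb Hdis)).
  intros n _. induction n as [|n IH]; simpl; [apply HD0|]. rewrite IH, HD0. ring.
Qed.

Definition null (A : X -> Prop) : Prop := exists B, borel d B /\ (forall x, A x -> B x) /\ mu B = 0.

Lemma null_sub A B : null B -> (forall x, A x -> B x) -> null A.
Proof. intros [C [HC [HBC H0]]] H. exists C; auto. Qed.

(* Disjointify the borel hulls B k into D k := B k minus the earlier ones. *)
Lemma null_Union (A : nat -> X -> Prop) : (forall k, null (A k)) -> null (fun x => exists k, A k x).
Proof.
  intro HA. destruct (functional_choice _ HA) as [B HB].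
  pose (D := fun k x => B k x /\ forall j, (j < k)%nat -> ~ B j x).
  assert (HDb : forall k, borel d (D k)).
  { intro k. apply borel_and; [apply HB|].
    rewrite (pred_ext (fun x => forall j, (j < k)%nat -> ~ B j x) (fun x => ~ exists j, (if lt_dec j k then B j else fun _ => False) x)).
    - apply borel_compl, borel_Union. intro j. destruct (lt_dec j k); [apply HB|apply borel_set0].
    - intro x; split.
      + intros Hn [j Hb]. destruct (lt_dec j k) as [l|l]; [exact (Hn j l Hb)|exact Hb].
      + intros Hn j Hj Hb. apply Hn. exists j. destruct (lt_dec j k); [exact Hb|lia]. }
  assert (HD0 : forall k, mu (D k) = 0).
  { intro k. destruct (HB k) as [HBb [_ HB0]].
    pose proof (measure_mono (D k) (B k) (HDb k) HBb ltac:(unfold D; tauto)).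
    pose proof (proj1 Hmu _ (HDb k)). lra. }
  exists (fun x => exists k, D k x). split; [|split].
  - now apply borel_Union.
  - intros x [k Hk]. apply (proj1 (proj2 (HB k))) in Hk. clear HA.
    induction k as [k IH] using lt_wf_ind.
    destruct (classic (exists j, (j < k)%nat /\ B j x)) as [[j [Hj Hbj]]|Hn].
    + exact (IH j Hj Hbj).
    + exists k. split; [exact Hk|]. intros j Hj Hb. apply Hn; eauto.
  - apply measure_disjoint_Union_null; auto.
    intros n m x Hnm [H1 H2] [H3 H4]. destruct (lt_dec n m); [apply (H4 n)|apply (H2 m)]; auto; lia.
Qed.

Lemma null_set0 : null (fun _ => False).
Proof. exists (fun _ => False). split; [apply borel_set0|split; [auto|apply measure_set0]]. Qed.

Lemma null_list_Union {Y : Type} (P : Y -> X -> Prop) (L : list Y) :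
  (forall y, In y L -> null (P y)) -> null (fun x => exists y, In y L /\ P y x).
Proof.
  induction L as [|a L IH]; intro H.
  - apply (null_sub _ _ null_set0). now intros x [y [[] _]].
  - apply (null_sub _ (fun x => exists k, pair_seq (P a) (fun x => exists y, In y L /\ P y x) k x)).
    + apply null_Union. intros [|[|k]]; simpl.
      * apply H; now left.
      * apply IH. intros y Hy. apply H; now right.
      * apply null_set0.
    + intros x [y [[<-|Hy] Hp]]; [now exists O|exists 1%nat; simpl; eauto].
Qed.

Lemma not_null_setT : ~ null (fun _ => True).
Proof.
  intros [B [_ [HB H0]]]. rewrite (pred_ext B (fun _ => True)) in H0 by (intro; split; auto).
  pose proof (proj1 (proj2 Hmu)). lra.
Qed.

End Measure.
Fixpoint all_words (M : nat) : list (list bool) :=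
  match M with
  | O => nil :: nil
  | S M => map (cons true) (all_words M) ++ map (cons false) (all_words M)
  end.

Lemma length_all_words M : length (all_words M) = (2 ^ M)%nat.
Proof. induction M; simpl; auto. rewrite length_app, !length_map, IHM. lia. Qed.

Lemma in_all_words_length M l : In l (all_words M) -> length l = M.
Proof.
  revert l; induction M as [|M IH]; simpl; intros l H; [now destruct H as [<-|[]]|].
  apply in_app_or in H.
  destruct H as [H|H]; apply in_map_iff in H; destruct H as [l' [<- Hl']]; simpl; auto.
Qed.

Lemma NoDup_all_words M : NoDup (all_words M).
Proof.
  induction M as [|M IH]; simpl; [repeat constructor; intros []|].
  apply NoDup_app; try (apply Injective_map_NoDup; [intros x y H; now injection H|exact IH]).
  intros a H1 H2. apply in_map_iff in H1, H2.
  destruct H1 as [x [<- _]]. destruct H2 as [y [Hy _]]. discriminate.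
Qed.

Lemma words_differ_at (l l' : list bool) M : length l = M -> length l' = M -> l <> l' ->
  exists q, (q < M)%nat /\ nth q l true <> nth q l' true.
Proof.
  revert l' M; induction l as [|a l IH]; intros [|a' l'] M H1 H2 Hne; simpl in *;
    [contradiction|lia|lia|].
  destruct (Bool.bool_dec a a') as [<-|Ha].
  - destruct (IH l' (pred M) ltac:(lia) ltac:(lia)) as [q [Hq Hn]]; [congruence|].
    exists (S q). split; [lia|exact Hn].
  - exists O. split; [lia|exact Ha].
Qed.

Lemma exp_INR_ln2 n : exp (INR n * ln 2) = 2 ^ n.
Proof.
  induction n as [|n IH]; [simpl; now rewrite Rmult_0_l, exp_0|].
  rewrite S_INR, Rmult_plus_distr_r, exp_plus, IH, Rmult_1_l, exp_ln by lra. simpl; ring.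
Qed.

(* Words of length M give 2^M points that are (M L, eps)-separated, so the growth
   rate is at least ln 2 / L; we use half of it to get a strict inequality. *)
Lemma positive_entropy_of_separated_words {X : Type} (d : X -> X -> R) (f : X -> X)
    (eps : R) (L t : nat) (SH : (nat -> bool) -> X) :
  is_metric d -> eps > 0 -> (t < L)%nat ->
  (forall w w' q, w q <> w' q ->
     d (Nat.iter (q * L + t) f (SH w)) (Nat.iter (q * L + t) f (SH w')) > eps) ->
  positive_topological_entropy d f.
Proof.
  intros Hm Heps Ht Hsep.
  assert (HL : 0 < INR L) by (apply lt_0_INR; lia).
  assert (Hln2 : 0 < ln 2) by (rewrite <- ln_1; apply ln_increasing; lra).
  exists eps. split; [exact Heps|]. exists (ln 2 / (2 * INR L)). split.
  { apply Rdiv_lt_0_compat; lra. }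
  intro N. set (M := S N). exists (M * L)%nat. split; [unfold M; nia|]. split; [unfold M; nia|].
  set (word := fun (l : list bool) q => nth q l true).
  assert (Hdiff : forall l l', In l (all_words M) -> In l' (all_words M) -> l <> l' ->
            exists q, (q < M)%nat /\ word l q <> word l' q).
  { intros l l' Hl Hl'. apply words_differ_at; now apply (in_all_words_length M). }
  exists (map (fun l => SH (word l)) (all_words M)). split; [split|].
  - apply NoDup_map_NoDup_ForallPairs; [|apply NoDup_all_words].
    intros l l' Hl Hl' Heq. apply NNPP; intro Hne.
    destruct (Hdiff l l' Hl Hl' Hne) as [q [_ Hq]].
    pose proof (Hsep _ _ q Hq) as Hd. rewrite Heq, (d_self _ _ Hm) in Hd. lra.
  - intros x y Hx Hy Hxy. apply in_map_iff in Hx, Hy.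
    destruct Hx as [l [<- Hl]]. destruct Hy as [l' [<- Hl']].
    destruct (Hdiff l l' Hl Hl') as [q [HqM Hq]]; [congruence|].
    exists (q * L + t)%nat. split; [nia|]. now apply Hsep.
  - rewrite length_map, length_all_words, pow_INR.
    replace (INR 2) with 2 by (simpl; ring). rewrite <- exp_INR_ln2. apply exp_increasing.
    assert (HM : 1 <= INR M) by (apply (le_INR 1); unfold M; lia).
    rewrite mult_INR.
    replace (ln 2 / (2 * INR L) * (INR M * INR L)) with (INR M * ln 2 / 2)
      by (field; lra). nra.
Qed.
Definition shadowing_on_nonwandering {X : Type} (d : X -> X -> R) (f : X -> X)
    (eps delta : R) : Prop :=
  forall xs : Z -> X,
    (forall i, nonwandering d f (xs i)) ->
    (forall i, d (f (xs i)) (xs (Z.succ i)) <= delta) ->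
    exists x, nonwandering d f x /\
      exists y : Z -> X, y 0%Z = x /\ (forall i, y (Z.succ i) = f (y i)) /\
        (forall i, d (y i) (xs i) <= eps).

Section Horseshoe.
Variable X : Type.
Variable d : X -> X -> R.
Variable f : X -> X.
Hypothesis Hm : is_metric d.
Variable g : X -> X.
Hypothesis Hfg : forall x, f (g x) = x.

Notation Om := (nonwandering d f).

Hypothesis Hg_Omega : forall x, Om x -> Om (g x).
Variables eps delta : R.
Hypothesis Heps : eps > 0.
Hypothesis Hshadow : shadowing_on_nonwandering d f eps delta.

Lemma forward_shadowing (P : nat -> X) :
  (forall m, Om (P m)) -> (forall m, d (f (P m)) (P (S m)) <= delta) ->
  exists x, forall m, d (Nat.iter m f x) (P m) <= eps.
Proof.
  intros HPO HPs.
  assert (Hdelta : 0 <= delta) by (pose proof (d_nonneg _ _ Hm (f (P O)) (P 1%nat)); specialize (HPs O); lra).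
  (* In negative time the pseudo-orbit follows the exact backward orbit of [P 0]. *)
  set (xs := fun i : Z =>
    if Z.ltb i 0 then Nat.iter (Z.to_nat (- i)) g (P O) else P (Z.to_nat i)).
  assert (Hback : forall m, Om (Nat.iter m g (P O))) by (induction m; simpl; auto).
  destruct (Hshadow xs) as [x [_ [y [Hy0 [Hys Hyd]]]]].
  - intro i; unfold xs. destruct (Z.ltb i 0); auto.
  - intro i. unfold xs. destruct (Z.ltb_spec i 0); destruct (Z.ltb_spec (Z.succ i) 0).
    + replace (Z.to_nat (- i)) with (S (Z.to_nat (- Z.succ i))) by lia. simpl.
      rewrite Hfg, (d_self _ _ Hm). exact Hdelta.
    + replace (Z.to_nat (- i)) with 1%nat by lia. replace (Z.to_nat (Z.succ i)) with O by lia.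
      simpl. rewrite Hfg, (d_self _ _ Hm). exact Hdelta.
    + lia.
    + replace (Z.to_nat (Z.succ i)) with (S (Z.to_nat i)) by lia. apply HPs.
  - exists x. intro m.
    assert (Hym : y (Z.of_nat m) = Nat.iter m f x).
    { induction m as [|m IH]; [exact Hy0|]. rewrite Nat2Z.inj_succ, Hys, IH. reflexivity. }
    rewrite <- Hym. specialize (Hyd (Z.of_nat m)). unfold xs in Hyd.
    destruct (Z.ltb_spec (Z.of_nat m) 0); [lia|]. now rewrite Nat2Z.id in Hyd.
Qed.

Definition pseudo_loop (A : nat -> X) (a : nat) : Prop :=
  (1 <= a)%nat /\ (forall i, (i < a)%nat -> Om (A i)) /\
  (forall i, (S i < a)%nat -> d (f (A i)) (A (S i)) <= delta) /\
  d (f (A (pred a))) (A O) <= delta.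

Definition loop_app (A : nat -> X) (a : nat) (B : nat -> X) (i : nat) : X :=
  if Nat.ltb i a then A i else B (i - a)%nat.

Lemma loop_app_lt A a B i : (i < a)%nat -> loop_app A a B i = A i.
Proof. intro H. unfold loop_app. destruct (Nat.ltb_spec i a); [reflexivity|lia]. Qed.

Lemma pseudo_loop_app A a B b : pseudo_loop A a -> pseudo_loop B b -> B O = A O ->
  pseudo_loop (loop_app A a B) (a + b).
Proof.
  intros [Ha [HAO [HAs HAc]]] [Hb [HBO [HBs HBc]]] HAB. unfold loop_app.
  split; [lia|split; [|split]].
  - intros i Hi. destruct (Nat.ltb_spec i a); [apply HAO|apply HBO]; lia.
  - intros i Hi. destruct (Nat.ltb_spec i a); destruct (Nat.ltb_spec (S i) a).
    + apply HAs; lia.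
    + replace (S i - a)%nat with O by lia. rewrite HAB. replace i with (pred a) by lia. exact HAc.
    + lia.
    + replace (S i - a)%nat with (S (i - a)) by lia. apply HBs; lia.
  - destruct (Nat.ltb_spec (pred (a + b)) a); [lia|]. destruct (Nat.ltb_spec 0 a); [|lia].
    replace (pred (a + b) - a)%nat with (pred b) by lia. rewrite <- HAB. exact HBc.
Qed.

Definition loop_word {I : Type} (C : I -> nat -> X) (L : nat) (w : nat -> I) (m : nat) : X :=
  C (w (m / L)%nat) (m mod L)%nat.

Lemma loop_word_block {I : Type} (C : I -> nat -> X) L w q r : (r < L)%nat ->
  loop_word C L w (q * L + r) = C (w q) r.
Proof.
  intro Hr. unfold loop_word.
  replace ((q * L + r) / L)%nat with q by (apply (Nat.div_unique _ _ _ r); lia).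
  replace ((q * L + r) mod L)%nat with r by (apply (Nat.mod_unique _ _ q); lia).
  reflexivity.
Qed.

Lemma loop_word_pseudo_orbit {I : Type} (C : I -> nat -> X) L k (w : nat -> I) :
  (forall c, pseudo_loop (C c) L) -> (forall c, C c O = k) -> forall m,
    Om (loop_word C L w m) /\ d (f (loop_word C L w m)) (loop_word C L w (S m)) <= delta.
Proof.
  intros HC Hk m.
  assert (HL : (1 <= L)%nat) by apply (HC (w O)).
  assert (Hr : (m mod L < L)%nat) by (apply Nat.mod_upper_bound; lia).
  assert (Hdec : m = (m / L * L + m mod L)%nat) by (pose proof (Nat.div_mod_eq m L); lia).
  set (q := (m / L)%nat) in *. set (r := (m mod L)%nat) in *. rewrite Hdec, loop_word_block by lia.
  destruct (HC (w q)) as [_ [HO [Hs Hcl]]]. split; [apply HO; lia|].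
  destruct (Nat.eq_dec (S r) L) as [HrL|HrL].
  - replace (S (q * L + r)) with (S q * L + 0)%nat by (simpl; lia).
    rewrite loop_word_block, Hk, <- (Hk (w q)) by lia. replace r with (pred L) by lia. exact Hcl.
  - replace (S (q * L + r)) with (q * L + S r)%nat by lia.
    rewrite loop_word_block by lia. apply Hs; lia.
Qed.

(* Free concatenations of the loops [A ++ B] and [B ++ A] are shadowed by points
   that separate at time [t] of each block where the words differ. *)
Lemma positive_entropy_of_two_loops A a B b t :
  pseudo_loop A a -> pseudo_loop B b -> B O = A O -> (t < a)%nat -> (t < b)%nat ->
  d (A t) (B t) > 3 * eps -> positive_topological_entropy d f.
Proof.
  intros HA HB HAB Hta Htb Hsep.
  set (C := fun c : bool => if c then loop_app A a B else loop_app B b A).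
  set (L := (a + b)%nat).
  assert (HC : forall c, pseudo_loop (C c) L).
  { intros [|]; unfold L; simpl; [|rewrite Nat.add_comm]; apply pseudo_loop_app; auto. }
  assert (HC0 : forall c, C c O = A O).
  { destruct HA as [Ha _]. destruct HB as [Hb _].
    intros [|]; simpl; rewrite loop_app_lt; auto; lia. }
  assert (HCt : forall c c', c <> c' -> d (C c t) (C c' t) > 3 * eps).
  { assert (Ht1 : C true t = A t) by (apply loop_app_lt; lia).
    assert (Ht2 : C false t = B t) by (apply loop_app_lt; lia).
    intros [|] [|] Hc; try congruence; rewrite Ht1, Ht2;
      first [exact Hsep|rewrite (d_sym _ _ Hm); exact Hsep]. }
  assert (Hsh : forall w, exists x, forall m, d (Nat.iter m f x) (loop_word C L w m) <= eps).
  { intro w. apply forward_shadowing; intro m; apply (loop_word_pseudo_orbit C L (A O) w HC HC0 m). }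
  destruct (functional_choice _ Hsh) as [SH HSH].
  apply (positive_entropy_of_separated_words d f eps L t SH Hm Heps ltac:(unfold L; lia)).
  intros w w' q Hq.
  pose proof (HSH w (q * L + t)%nat) as H1. pose proof (HSH w' (q * L + t)%nat) as H2.
  rewrite loop_word_block in H1, H2 by (unfold L; lia). pose proof (HCt _ _ Hq) as H3.
  set (u := Nat.iter (q * L + t) f (SH w)) in *. set (u' := Nat.iter (q * L + t) f (SH w')) in *.
  pose proof (d_triangle_sym _ _ Hm (C (w q) t) u (C (w' q) t)).
  pose proof (d_triangle _ _ Hm u u' (C (w' q) t)). lra.
Qed.

End Horseshoe.
Section Recurrence.
Variable X : Type.
Variable d : X -> X -> R.
Variable f : X -> X.
Hypothesis Hm : is_metric d.
Hypothesis Hc : compact_metric d.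
Variable g : X -> X.
Hypothesis Hg : continuous_map d g.
Hypothesis Hgf : forall x, g (f x) = x.
Hypothesis Hfg : forall x, f (g x) = x.

Notation Om := (nonwandering d f).

Lemma iter_f_g n y : Nat.iter n f (g y) = g (Nat.iter n f y).
Proof. induction n as [|n IH]; simpl; auto. rewrite IH, Hfg, Hgf. reflexivity. Qed.

Lemma nonwandering_inv x : Om x -> Om (g x).
Proof.
  intros Hx U [V [HVo [HVx HVU]]].
  destruct (Hx (fun y => V (g y))) as [n [Hn [y [Hy1 Hy2]]]].
  { exists (fun y => V (g y)). split; [|split; auto].
    intros y Hy. destruct (HVo _ Hy) as [r [Hr Hball]]. destruct (Hg y r Hr) as [s [Hs Hgs]].
    exists s; split; auto. }
  exists n; split; [exact Hn|]. exists (g y). split; [auto|]. rewrite iter_f_g. auto.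
Qed.

Lemma eventually_near_nonwandering eta x : eta > 0 ->
  exists n0, forall t, (t >= n0)%nat -> exists p, Om p /\ d (Nat.iter t f x) p < eta.
Proof.
  intro Heta. apply NNPP; intro Hno.
  assert (Hfar : forall n0, exists t, (t >= n0)%nat /\ forall p, Om p -> d (Nat.iter t f x) p >= eta).
  { intro n0. apply NNPP; intro Hn. apply Hno. exists n0. intros t Ht. apply NNPP; intro Hn2.
    apply Hn. exists t; split; [exact Ht|]. intros p Hp. apply Rnot_lt_ge. intro. apply Hn2; eauto. }
  destruct (functional_choice _ Hfar) as [tau Htau].
  destruct (subseq_converges X d Hc (fun j => Nat.iter (tau j) f x)) as [phi [v [Hphi Hv]]].
  (* The limit of these points far from Omega(f) is itself nonwandering. *)
  assert (Hvo : Om v).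
  { intros U [V [HVo [HVv HVU]]]. destruct (HVo v HVv) as [r [Hr Hball]].
    destruct (Hv r Hr) as [N HN]. set (m := S (N + tau (phi N))).
    assert (Hlater : (tau (phi m) > tau (phi N))%nat).
    { pose proof (proj1 (Htau (phi m))). pose proof (strict_mono_ge phi Hphi m). unfold m in *; lia. }
    exists (tau (phi m) - tau (phi N))%nat. split; [lia|].
    exists (Nat.iter (tau (phi N)) f x). split.
    - apply HVU, Hball. rewrite (d_sym _ _ Hm). apply HN; lia.
    - rewrite <- Nat.iter_add. replace (tau (phi m) - tau (phi N) + tau (phi N))%nat
        with (tau (phi m)) by lia.
      apply HVU, Hball. rewrite (d_sym _ _ Hm). apply HN. unfold m; lia. }
  destruct (Hv eta Heta) as [N HN]. specialize (HN N (le_n N)).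
  pose proof (proj2 (Htau (phi N)) v Hvo). lra.
Qed.

Definition Omega_recurrent (eta : R) (z : X) : Prop :=
  (forall t, exists p, Om p /\ d (Nat.iter t f z) p < eta) /\
  (forall T, exists s, (s > T)%nat /\ d (Nat.iter s f z) z < eta).

Lemma exists_Omega_recurrent eta x : eta > 0 -> exists n, Omega_recurrent eta (Nat.iter n f x).
Proof.
  intro Heta. destruct (eventually_near_nonwandering eta x Heta) as [n0 Hn0].
  destruct (subseq_converges X d Hc (fun j => Nat.iter j f x)) as [phi [w [Hphi Hw]]].
  destruct (converges_close X d Hm _ _ eta Hw Heta) as [N HN].
  set (K := (N + n0)%nat). exists (phi K). split.
  - intro t. rewrite <- Nat.iter_add. apply Hn0. pose proof (strict_mono_ge phi Hphi K). unfold K in *; lia.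
  - intro T. exists (phi (K + S T) - phi K)%nat.
    pose proof (strict_mono_add phi Hphi K (S T)). split; [lia|].
    rewrite <- Nat.iter_add. replace (phi (K + S T) - phi K + phi K)%nat with (phi (K + S T)%nat) by lia.
    apply HN; unfold K; lia.
Qed.

Variables eps delta rho eta : R.
Hypothesis Heps : eps > 0.
Hypothesis Hshadow : shadowing_on_nonwandering d f eps delta.
Hypothesis Hu : forall a b, d a b < rho -> d (f a) (f b) < delta / 4.
Hypothesis Heta_rho : 2 * eta <= rho.
Hypothesis Heta_delta : 4 * eta <= delta.

Lemma pseudo_loop_of_return z B s :
  (forall i, Om (B i) /\ d (Nat.iter i f z) (B i) < 2 * eta) -> (1 <= s)%nat ->
  d (Nat.iter s f z) z < eta -> pseudo_loop X d f delta B s.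
Proof.
  intros HB Hs Hret.
  assert (Hstep : forall i, d (f (B i)) (Nat.iter (S i) f z) < delta / 4).
  { intro i. simpl. rewrite (d_sym _ _ Hm). apply Hu. pose proof (proj2 (HB i)). lra. }
  split; [exact Hs|split; [|split]].
  - intros i _. apply HB.
  - intros i _. pose proof (Hstep i). pose proof (proj2 (HB (S i))).
    pose proof (d_triangle _ _ Hm (f (B i)) (Nat.iter (S i) f z) (B (S i))).
    pose proof (d_nonneg _ _ Hm (Nat.iter (S i) f z) (B (S i))). lra.
  - pose proof (Hstep (pred s)) as Hlast. replace (S (pred s)) with s in Hlast by lia.
    pose proof (proj2 (HB O)) as Hbase. simpl in Hbase.
    pose proof (d_triangle _ _ Hm (f (B (pred s))) (Nat.iter s f z) (B O)).
    pose proof (d_triangle _ _ Hm (Nat.iter s f z) z (B O)). lra.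
Qed.

(* Otherwise the two return loops, joined at a common base point, form a horseshoe. *)
Lemma Omega_recurrent_orbits_stay_close z z' :
  ~ positive_topological_entropy d f -> Omega_recurrent eta z -> Omega_recurrent eta z' ->
  d z z' < eta -> forall t, d (Nat.iter t f z) (Nat.iter t f z') <= 3 * eps + 3 * eta.
Proof.
  intros Hno [Hnear Hret] [Hnear' Hret'] Hzz' t.
  destruct (functional_choice _ Hnear) as [p Hp]. destruct (functional_choice _ Hnear') as [p' Hp'].
  destruct (Hret t) as [s [Hs Hds]]. destruct (Hret' t) as [s' [Hs' Hds']].
  set (B := fun i => if Nat.eqb i 0 then p O else p' i).
  assert (Hp2 : forall i, Om (p i) /\ d (Nat.iter i f z) (p i) < 2 * eta).
  { intro i. destruct (Hp i) as [HO Hd]. pose proof (d_nonneg _ _ Hm (Nat.iter i f z) (p i)).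
    split; [exact HO|lra]. }
  assert (HB : forall i, Om (B i) /\ d (Nat.iter i f z') (B i) < 2 * eta).
  { intros [|i]; unfold B; simpl.
    - split; [apply Hp|]. pose proof (proj2 (Hp O)) as Hbase. simpl in Hbase.
      pose proof (d_triangle_sym _ _ Hm z' z (p O)). lra.
    - destruct (Hp' (S i)) as [HO Hd]. pose proof (d_nonneg _ _ Hm (Nat.iter (S i) f z') (p' (S i))).
      split; [exact HO|simpl in *; lra]. }
  assert (Hsep : d (p t) (B t) <= 3 * eps).
  { apply Rnot_gt_le. intro Hgt. apply Hno.
    apply (positive_entropy_of_two_loops X d f Hm g Hfg nonwandering_inv eps delta Heps Hshadow
             p s B s' t); try (lia || reflexivity).
    - apply (pseudo_loop_of_return z); [exact Hp2|lia|exact Hds].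
    - apply (pseudo_loop_of_return z'); [exact HB|lia|exact Hds'].
    - exact Hgt. }
  pose proof (proj2 (Hp t)). pose proof (proj2 (HB t)).
  pose proof (d_triangle _ _ Hm (Nat.iter t f z) (p t) (Nat.iter t f z')).
  pose proof (d_triangle _ _ Hm (p t) (B t) (Nat.iter t f z')).
  rewrite (d_sym _ _ Hm (B t)) in *. lra.
Qed.

End Recurrence.
Section Expansive.
Variable X : Type.
Variable d : X -> X -> R.
Variable f : X -> X.
Variable mu : (X -> Prop) -> R.
Hypothesis Hmu : borel_probability d mu.
Hypothesis Hm : is_metric d.
Hypothesis Hc : compact_metric d.
Hypothesis Hf : continuous_map d f.
Variable e : R.
Hypothesis He : e > 0.
Hypothesis HPhi : forall b, mu (Phi d f e b) = 0.

Lemma borel_Phi b : borel d (Phi d f e b).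
Proof.
  apply borel_closed. intros y Hy. apply not_all_ex_not in Hy. destruct Hy as [i Hi].
  apply Rnot_le_lt in Hi.
  destruct (iter_continuous X d f Hf i y (d (Nat.iter i f b) (Nat.iter i f y) - e) ltac:(lra))
    as [r [Hr Hci]].
  exists r; split; [exact Hr|]. intros z Hz HPz. specialize (HPz i). specialize (Hci z Hz).
  pose proof (d_triangle _ _ Hm (Nat.iter i f b) (Nat.iter i f z) (Nat.iter i f y)) as Htri.
  rewrite (d_sym _ _ Hm (Nat.iter i f z)) in Htri. lra.
Qed.

Definition tube (y0 : X) (n : nat) (r : R) : X -> Prop :=
  fun y => forall t, d (Nat.iter t f (Nat.iter n f y)) (Nat.iter t f y0) <= r.

(* Finitely many Bowen balls of length [n] cover the tube, and each of them lies in some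
   [Phi e b]: up to time [n] by the Bowen ball, afterwards by the tube. *)
Lemma null_tube y0 n : null X d mu (tube y0 n (e / 2)).
Proof.
  destruct (finite_bowen_net X d f Hm Hc Hf (tube y0 n (e / 2)) n (e / 2) ltac:(lra))
    as [L [HLt HLnet]].
  apply (null_sub X d mu _ (fun y => exists b, In b L /\ Phi d f e b y)).
  - apply null_list_Union; [exact Hmu|]. intros b _. exists (Phi d f e b).
    split; [apply borel_Phi|split; auto].
  - intros y Hy. destruct (HLnet y Hy) as [b [Hb Hyb]]. exists b. split; [exact Hb|].
    intro i. destruct (lt_dec i n) as [Hi|Hi].
    + rewrite (d_sym _ _ Hm). pose proof (Hyb i Hi). lra.
    + replace i with (i - n + n)%nat by lia. rewrite !Nat.iter_add.
      pose proof (Hy (i - n)%nat). pose proof (HLt b Hb (i - n)%nat).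
      pose proof (d_triangle _ _ Hm (Nat.iter (i - n) f (Nat.iter n f b)) (Nat.iter (i - n) f y0)
        (Nat.iter (i - n) f (Nat.iter n f y))) as Htri.
      rewrite (d_sym _ _ Hm (Nat.iter (i - n) f y0)) in Htri. lra.
Qed.

End Expansive.
Lemma Rmin_pos_bounds a b c : a > 0 -> b > 0 -> c > 0 ->
  exists eta, eta > 0 /\ eta <= a /\ eta <= b /\ eta <= c.
Proof.
  intros Ha Hb Hc. exists (Rmin (Rmin a b) c). pose proof (Rmin_l (Rmin a b) c).
  pose proof (Rmin_l a b). pose proof (Rmin_r a b).
  repeat split; try lra; [repeat apply Rmin_pos; lra|apply Rmin_r].
Qed.

Theorem theorem1 (X : Type) (d : X -> X -> R) (f : X -> X)
  (Hmetric : is_metric d) (Hcompact : compact_metric d)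
  (Hhomeo : homeomorphism d f)
  (Hpotp : potp_on_nonwandering d f)
  (Hexp : exists mu : (X -> Prop) -> R, positively_expansive_measure d f mu) :
  positive_topological_entropy d f.
Proof.
  destruct Hexp as [mu [Hmu [e [He HPhi]]]].
  destruct Hhomeo as [g [Hf [Hg [Hgf Hfg]]]].
  (* [3 eps + 3 eta <= 6 eps = e / 2] is the tube width that [null_tube] handles. *)
  set (eps := e / 12).
  destruct (Hpotp eps ltac:(unfold eps; lra)) as [delta [Hdelta Hshadow]].
  destruct (uniform_continuity X d f Hmetric Hcompact Hf (delta / 4) ltac:(lra)) as [rho [Hrho Hu]].
  destruct (Rmin_pos_bounds (rho / 2) (delta / 4) eps ltac:(lra) ltac:(lra) ltac:(unfold eps; lra))
    as [eta [Heta [Heta_rho [Heta_delta Heta_eps]]]].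
  apply NNPP; intro Hno.
  destruct (finite_ball_net X d Hmetric Hcompact (Omega_recurrent X d f eta) eta Heta)
    as [L [HLrec HLnet]].
  apply (not_null_setT X d mu Hmu).
  apply (null_sub X d mu _ (fun x => exists y0, In y0 L /\ exists n, tube X d f y0 n (e / 2) x)).
  - apply (null_list_Union X d mu Hmu). intros y0 _.
    apply (null_Union X d mu Hmu (fun n => tube X d f y0 n (e / 2))). intro n.
    now apply null_tube.
  - intros x _. destruct (exists_Omega_recurrent X d f Hmetric Hcompact eta x Heta) as [n Hn].
    destruct (HLnet _ Hn) as [y0 [Hy0 Hd]]. exists y0. split; [exact Hy0|]. exists n. intro t.
    pose proof (Omega_recurrent_orbits_stay_close X d f Hmetric g Hg Hgf Hfg eps delta rho eta
      ltac:(unfold eps; lra) Hshadow Hu ltac:(lra) ltac:(lra) _ _ Hno Hn (HLrec y0 Hy0) Hd t).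
    unfold eps in *; lra.
Qed.
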